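(* Let $Q$ be an anti-symmetric quiver on vertices $1,\dots,n,\tilde1,\dots,\tilde n$ with exchange matrix $(b_{ij})$. Suppose $\Sigma_Q=(\{x_1,\dots,x_n\},\{F_1^Q,\dots,F_n^Q\})$ is a valid LP seed and $\hat F_i=F_i$ for all $i\in\{1,\dots,n\}$. Let $i$ be a vertex of $Q$ such that there is no path $a\to i\to\tilde a$ for any vertex $a$. Then mutation at $i$ and $\tilde i$ in $Q$ corresponds to LP mutation of $\Sigma_Q$ at $i$, i.e. $$\Big(\{x_1,\dots,\tfrac{F_i}{x_i},\dots,x_n\},\{F_1^{\mu_i\circ\mu_{\tilde i}(Q)},\dots,F_n^{\mu_i\circ\mu_{\tilde i}(Q)}\}\Big)=\mu_i\big(\{x_1,\dots,x_n\},\{F_1^Q,\dots,F_n^Q\}\big).$$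
   Context: A quiver $Q$ (no loops) is encoded by the skew-symmetric matrix $b_{ij}=$ (number of arrows $i\to j$) $-$ (number of arrows $j\to i$); $\mu_k$ denotes Fomin–Zelevinsky quiver mutation. $Q$ on vertices $1,\dots,n,\tilde1,\dots,\tilde n$ (with $\tilde{\tilde i}=i$) is anti-symmetric if $i\to j$ iff $\tilde j\to\tilde i$ for all vertices $i,j$, and there is no arrow $i\to\tilde i$. For $j\in\{1,\dots,n\}$ set $F_j^Q=\prod_{b_{ij}+b_{\tilde ij}>0}x_i^{b_{ij}+b_{\tilde ij}}+\prod_{b_{ij}+b_{\tilde ij}<0}x_i^{-(b_{ij}+b_{\tilde ij})}$, products over $i\in\{1,\dots,n\}$, in $\mathbb{Z}[x_1,\dots,x_n]$. LP seed over $R=\mathbb{Z}$: $(\mathbf x,\mathbf F)$ with $\mathbf x$ a transcendence basis of the field and each $F_i$ an irreducible polynomial not involving $x_i$ and not equal to any $x_k$. Normalisation: $\hat F_j=F_j/\prod_{k\ne j}x_k^{a_k}$ where $a_k\ge0$ is maximal such that $F_k^{a_k}$ divides $F_j|_{x_k\leftarrow F_k/x}$ in $R[x_1,\dots,x_{k-1},x^{\pm1},x_{k+1},\dots,x_n]$. LP mutation at $i$: $x_i'=\hat F_i/x_i$, $x_j'=x_j$ ($j\ne i$); if $x_i\notin F_j$ then $F_j'=F_j$; otherwise $G_j=F_j|_{x_i\leftarrow \hat F_i|_{x_j\leftarrow0}/x_i'}$, $H_j$ = $G_j$ with all common factors with $\hat F_i|_{x_j\leftarrow0}$ divided out, and $F_j'=MH_j$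 with $M$ the unique monic Laurent monomial in the new variables such that $F_j'$ is a polynomial not divisible by any new variable. Exchange polynomials are defined up to units of $R$. *)

From HB Require Import structures.
From mathcomp Require Import all_boot all_order all_algebra.
From mathcomp Require Import fraction.
From mathcomp Require Import mpoly.
Set Implicit Arguments. Unset Strict Implicit. Unset Printing Implicit Defensive.
Import Order.TTheory GRing.Theory Num.Theory.
Local Open Scope ring_scope.
Notation "x %:F" := (@FracField.tofrac _ x) : ring_scope.

(* Vertices 1..n are [lshift n k], vertices ~1..~n are [rshift n k]. *)
Definition tl (n : nat) (v : 'I_(n + n)) : 'I_(n + n) :=
  match split v with inl k => rshift n k | inr k => lshift n k end.

Definition skew_sym (n : nat) (B : 'M[int]_(n + n)) : Prop :=
  forall a b, B a b = - B b a.

Definition anti_symmetric (n : nat) (B : 'M[int]_(n + n)) : Prop :=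
  (forall a b, B a b = B (tl b) (tl a)) /\ (forall a, B a (tl a) = 0).

Definition mu (m : nat) (k : 'I_m) (B : 'M[int]_m) : 'M[int]_m :=
  \matrix_(a, b)
    (if (a == k) || (b == k) then - B a b
     else B a b + Num.max (B a k) 0 * Num.max (B k b) 0
                - Num.max (- B a k) 0 * Num.max (- B k b) 0).

Definition Fcoef (n : nat) (B : 'M[int]_(n + n)) (j k : 'I_n) : int :=
  B (lshift n k) (lshift n j) + B (rshift n k) (lshift n j).

Definition FQ (n : nat) (B : 'M[int]_(n + n)) (j : 'I_n) : {mpoly int[n]} :=
  \prod_(k < n | 0 < Fcoef B j k) 'X_k ^+ absz (Fcoef B j k)
  + \prod_(k < n | Fcoef B j k < 0) 'X_k ^+ absz (Fcoef B j k).

Definition mdvd (n : nat) (p q : {mpoly int[n]}) : Prop :=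
  exists r, q = p * r.

Definition mirreducible (n : nat) (p : {mpoly int[n]}) : Prop :=
  p != 0 /\ p \isn't a GRing.unit /\
  forall a b, p = a * b -> a \is a GRing.unit \/ b \is a GRing.unit.

Definition involves (n : nat) (p : {mpoly int[n]}) (k : 'I_n) : bool :=
  has (fun m : 'X_{1..n} => (0 < m k)%N) (msupp p).

Definition Xf (n : nat) (k : 'I_n) : {fraction {mpoly int[n]}} :=
  ('X_k : {mpoly int[n]})%:F.

Definition Xmf (n : nat) (m : 'X_{1..n}) : {fraction {mpoly int[n]}} :=
  ('X_[m] : {mpoly int[n]})%:F.

Definition subst1 (n : nat) (p : {mpoly int[n]}) (k : 'I_n)
    (r : {fraction {mpoly int[n]}}) : {fraction {mpoly int[n]}} :=
  mmap (fun c : int => c%:~R) (fun l => if l == k then r else Xf l) p.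

Definition subst0 (n : nat) (p : {mpoly int[n]}) (k : 'I_n) : {mpoly int[n]} :=
  mmap (fun c : int => c%:MP) (fun l => if l == k then 0 else 'X_l) p.

Definition valid_LP_seed (n : nat) (F : 'I_n -> {mpoly int[n]}) : Prop :=
  forall j, [/\ mirreducible (F j), ~~ involves (F j) j
              & forall k, F j <> 'X_k].

(* F_k^a divides F_j|_{x_k <- F_k/x} in R[x_1,..,x^{+-1},..,x_n]; the new
   variable x is represented by the (now free) slot x_k, and a Laurent
   polynomial in x is Q / x^e with Q a polynomial. *)
Definition laurent_div (n : nat) (F : 'I_n -> {mpoly int[n]}) (j k : 'I_n)
    (a : nat) : Prop :=
  exists (Q : {mpoly int[n]}) (e : nat),
    subst1 (F j) k ((F k)%:F / Xf k) * Xf k ^+ e = ((F k) ^+ a * Q)%:F.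

Definition max_exp (n : nat) (F : 'I_n -> {mpoly int[n]}) (j k : 'I_n)
    (a : nat) : Prop :=
  laurent_div F j k a /\ ~ laurent_div F j k a.+1.

Definition is_hat (n : nat) (F : 'I_n -> {mpoly int[n]}) (j : 'I_n)
    (h : {fraction {mpoly int[n]}}) : Prop :=
  exists a : 'I_n -> nat,
    (forall k, k != j -> max_exp F j k (a k)) /\
    h = (F j)%:F / \prod_(k < n | k != j) Xf k ^+ a k.

(* F'j is (up to units of Z) the new exchange polynomial F_j' produced by LP
   mutation at i, where Fhat = \hat F_i.  F'j is written in the new cluster
   variables (slot i stands for x_i'). *)
Definition lp_exchange (n : nat) (F : 'I_n -> {mpoly int[n]}) (i : 'I_n)
    (Fhat : {mpoly int[n]}) (j : 'I_n) (F'j : {mpoly int[n]}) : Prop :=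
  if ~~ involves (F j) i then F'j = F j \/ F'j = - F j
  else
    let P := subst0 Fhat j in
    let G := subst1 (F j) i (P%:F / Xf i) in
    (* H_j = H * X^b / X^a, with G_j = D * H_j and D collecting exactly the
       common factors with P; F_j' = M * H_j with M a monic Laurent monomial *)
    exists (D H : {mpoly int[n]}) (a b c d : 'X_{1..n}),
      [/\ G * Xmf a = (D * H)%:F * Xmf b,
          (forall q, mirreducible q -> mdvd q D -> mdvd q P),
          (forall q, mdvd q H -> mdvd q P -> q \is a GRing.unit),
          F'j%:F * Xmf c = H%:F * Xmf d
        & forall k, ~ mdvd 'X_k F'j].

Definition lp_mutation (n : nat) (F : 'I_n -> {mpoly int[n]}) (i : 'I_n)
    (x' : 'I_n -> {fraction {mpoly int[n]}}) (F' : 'I_n -> {mpoly int[n]})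
    : Prop :=
  exists Fhat : {mpoly int[n]},
    [/\ is_hat F i Fhat%:F,
        (forall k, x' k = if k == i then Fhat%:F / Xf i else Xf k)
      & forall j, lp_exchange F i Fhat j (F' j)].

From HB Require Import structures.
From mathcomp Require Import all_boot all_order all_algebra.
From mathcomp Require Import fraction.
From mathcomp Require Import mpoly.
From mathcomp Require Import zify ring.
Import Order.TTheory GRing.Theory Num.Theory.
Set Implicit Arguments. Unset Strict Implicit. Unset Printing Implicit Defensive.
Local Open Scope ring_scope.

(* For an anti-symmetric quiver every F_j^Q is a binomial x^{c_j^+} + x^{c_j^-}
   with exponent vector c_j(k) = b_{kj} + b_{~k j}.  As b_{i ~i} = 0, mutating
   at ~i leaves row and column i untouched, and in mu_i (mu_~i Q) the exponent
   vector of F_j (j <> i) becomes c_j + c_j(i) (p - 2 e_i), where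
   x^p = F_i|_{x_j <- 0}.  The absence of paths a -> i -> ~a is what collapses
   the four Fomin-Zelevinsky correction terms into this single product, and it
   also makes F_i|_{x_j <- 0} a monomial whenever x_i occurs in F_j.  On the LP
   side, substituting x_i <- x^p / x_i into the binomial F_j gives that same
   binomial up to a Laurent monomial; it is divisible by no variable and coprime
   to x^p, so it is the new exchange polynomial. *)

Definition mu_corr (x y : int) : int :=
  Num.max x 0 * Num.max y 0 - Num.max (- x) 0 * Num.max (- y) 0.

Lemma max0_cases (x : int) :
  [/\ x < 0, Num.max x 0 = 0 & Num.max (- x) 0 = - x] \/
  [/\ x = 0, Num.max x 0 = 0 & Num.max (- x) 0 = 0] \/
  [/\ 0 < x, Num.max x 0 = x & Num.max (- x) 0 = 0].
Proof.
case: (ltrgtP x 0) => hx; [left | right; right | right; left]; split => //;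
  rewrite ?hx ?oppr0 ?maxxx //; apply/max_idPl || apply/max_idPr; lia.
Qed.

Lemma mulr_le0_sign (x y : int) : x * y <= 0 -> ~ (0 < x /\ 0 < y) /\ ~ (x < 0 /\ y < 0).
Proof. by move=> hxy; split=> -[hx hy]; nia. Qed.

(* Used with a = b_{ki}, b = b_{k~i}, s = b_{ij}, t = b_{~ij}: the sign
   conditions are the absence of paths k -> i -> ~k, ~k -> i -> k and
   ~j -> i -> j, j -> i -> ~j. *)
Lemma mu_corr_sum (a b s t : int) : a * b <= 0 -> s * t <= 0 ->
  mu_corr b t + mu_corr a s + mu_corr (- a) t + mu_corr (- b) s =
  (s + t) * (if 0 < t - s then Num.max (- (a - b)) 0 else Num.max (a - b) 0).
Proof.
move=> /mulr_le0_sign [hab1 hab2] /mulr_le0_sign [hst1 hst2]; rewrite /mu_corr.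
case: (max0_cases a) => [[ha -> ->]|[[ha -> ->]|[ha -> ->]]];
case: (max0_cases b) => [[hb -> ->]|[[hb -> ->]|[hb -> ->]]]; try by exfalso; lia.
all: case: (max0_cases s) => [[hs -> ->]|[[hs -> ->]|[hs -> ->]]];
case: (max0_cases t) => [[ht -> ->]|[[ht -> ->]|[ht -> ->]]]; try by exfalso; lia.
all: case: (max0_cases (a - b)) => [[hd -> ->]|[[hd -> ->]|[hd -> ->]]]; try by exfalso; lia.
all: rewrite ?opprK; case: ifP => ?; lia.
Qed.

Definition pos_exp n (c : 'I_n -> int) : 'X_{1..n} :=
  [multinom if (0 < c k)%R then `|c k|%N else 0%N | k < n].

Definition neg_exp n (c : 'I_n -> int) : 'X_{1..n} :=
  [multinom if (c k < 0)%R then `|c k|%N else 0%N | k < n].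

Definition mbinom n (c : 'I_n -> int) : {mpoly int[n]} :=
  'X_[pos_exp c] + 'X_[neg_exp c].

Definition mbinom0 n (c : 'I_n -> int) (j : 'I_n) : 'X_{1..n} :=
  if 0 < c j then neg_exp c else pos_exp c.

Definition exchange_exp n (c : 'I_n -> int) (i : 'I_n) (p : 'X_{1..n})
    (k : 'I_n) : int :=
  c k + c i * ((p k)%:Z - 2 * (k == i)%:Z).

Section ExponentVectors.
Variables (n : nat) (c : 'I_n -> int).

Lemma pos_expZ k : (pos_exp c k)%:Z = Num.max (c k) 0.
Proof. by rewrite mnmE /Order.max; do 2!case: ifP; lia. Qed.

Lemma neg_expZ k : (neg_exp c k)%:Z = Num.max (- c k) 0.
Proof. by rewrite mnmE /Order.max; do 2!case: ifP; lia. Qed.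

Lemma pos_exp_subn_neg k : (pos_exp c k)%:Z - (neg_exp c k)%:Z = c k.
Proof. by rewrite pos_expZ neg_expZ /Order.max; do 2!case: ifP; lia. Qed.

Lemma pos_neg_exp0 k : (pos_exp c k == 0%N) || (neg_exp c k == 0%N).
Proof. by rewrite !mnmE; case: ifP; case: ifP; lia. Qed.

Lemma pos_expN : pos_exp (fun k => - c k) = neg_exp c.
Proof. by apply/mnmP => k; rewrite !mnmE; case: ifP; case: ifP; lia. Qed.

Lemma neg_expN : neg_exp (fun k => - c k) = pos_exp c.
Proof. by apply/mnmP => k; rewrite !mnmE; case: ifP; case: ifP; lia. Qed.

Lemma mbinomN : mbinom (fun k => - c k) = mbinom c.
Proof. by rewrite /mbinom pos_expN neg_expN addrC. Qed.

End ExponentVectors.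

Lemma eq_mbinom n (c1 c2 : 'I_n -> int) : c1 =1 c2 -> mbinom c1 = mbinom c2.
Proof.
by move=> e; rewrite /mbinom; congr ('X_[_] + 'X_[_]); apply/mnmP => k; rewrite !mnmE e.
Qed.

Lemma FQ_mbinom n (B : 'M[int]_(n + n)) j : FQ B j = mbinom (Fcoef B j).
Proof.
rewrite /FQ /mbinom !mpolyXE_id; congr (_ + _); rewrite big_mkcond;
  by apply: eq_bigr => k _; rewrite mnmE; case: ifP.
Qed.

Section Subst0.
Variable n : nat.
Implicit Types (p q : {mpoly int[n]}) (m : 'X_{1..n}).

Lemma subst0M p q k : subst0 (p * q) k = subst0 p k * subst0 q k.
Proof. exact: rmorphM. Qed.

Lemma subst0D p q k : subst0 (p + q) k = subst0 p k + subst0 q k.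
Proof. exact: raddfD. Qed.

Lemma subst0_mpolyX m k : subst0 'X_[m] k = if m k == 0%N then 'X_[m] else 0.
Proof.
rewrite /subst0 mmapX /mmap1; case: eqP => mk.
  rewrite mpolyXE_id; apply: eq_bigr => l _.
  by case: eqP => // ->; rewrite mk !expr0.
by rewrite (bigD1 k) //= eqxx expr0n; move/eqP/negbTE: mk => ->; rewrite mul0r.
Qed.

Lemma mpolyX_neq0 m : 'X_[m] != 0 :> {mpoly int[n]}.
Proof. by apply/eqP => h; have := @mcoeffX n int m m; rewrite h mcoeff0 eqxx. Qed.

Lemma mnm_split m k : (0 < m k)%N -> m = (U_(k) + (m - U_(k)))%MM.
Proof.
by move=> mk; apply/mnmP => l; rewrite mnmDE mnmBE mnm1E; case: eqP => [<-|_]; lia.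
Qed.

Lemma mpolyX_split m k : (0 < m k)%N -> 'X_[m] = 'X_k * 'X_[m - U_(k)] :> {mpoly int[n]}.
Proof. by move=> mk; rewrite -mpolyXD -mnm_split. Qed.

Lemma subst0_eq0 p k : subst0 p k = 0 <-> mdvd 'X_k p.
Proof.
split=> [p0|[q ->]]; last by rewrite subst0M subst0_mpolyX mnm1E eqxx mul0r.
exists (\sum_(m <- msupp p | m k != 0%N) p@_m *: 'X_[m - U_(k)]).
rewrite {1}(mpolyE p) (bigID (fun m : 'X_{1..n} => m k == 0%N)) /=.
have -> : \sum_(m <- msupp p | m k == 0%N) p@_m *: 'X_[m] = subst0 p k.
  rewrite [in subst0 p k](mpolyE p) /subst0 raddf_sum /= [LHS]big_mkcond /=.
  apply: eq_bigr => m _; rewrite mmapZ -/(subst0 _ _) subst0_mpolyX.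
  by case: ifP => _; rewrite ?mulr0 // mul_mpolyC.
rewrite p0 add0r mulr_sumr; apply: eq_bigr => m mk.
by rewrite -scalerAr -mpolyX_split // lt0n.
Qed.

Lemma mdvd1 q : mdvd q 1 -> q \is a GRing.unit.
Proof. by case=> r /esym; rewrite mulrC => /mpoly_intro_unit. Qed.

Lemma mdvd_mpolyX q m : mdvd q 'X_[m] ->
  exists u w, u \is a GRing.unit /\ q = u%:MP * 'X_[w].
Proof.
elim: {m}(mdeg m) {-2}m (erefl (mdeg m)) q => [|d IH] m dm q [r qr].
  move/eqP: dm; rewrite mdeg_eq0 => /eqP m0; rewrite m0 mpolyX0 in qr.
  have : r * q = 1 by rewrite mulrC qr.
  move/mpoly_intro_unit => /andP[/eqP qE uq].
  by exists q@_0, 0%MM; rewrite mpolyX0 mulr1.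
have [k mk] : exists k, (0 < m k)%N.
  case: (pickP (fun k => 0 < m k)%N) => [k mk|m0]; first by exists k.
  by move: dm; rewrite mdegE big1 // => l _; move: (m0 l) => /=; lia.
have dm' : mdeg (m - U_(k))%MM = d.
  by move: dm; rewrite {1}(mnm_split mk) mdegD mdeg1 add1n => -[].
have Xk_reg : GRing.lreg ('X_k : {mpoly int[n]}) by apply/mulfI/mpolyX_neq0.
have : (subst0 q k == 0) || (subst0 r k == 0).
  by rewrite -mulf_eq0 -subst0M -qr subst0_mpolyX eqn0Ngt mk.
case/orP => /eqP /subst0_eq0 [g gE]; rewrite gE in qr *.
  have /(IH _ dm') [u [w [uU ->]]] : mdvd g 'X_[m - U_(k)].
    by exists r; apply: Xk_reg; rewrite mulrA -qr -mpolyX_split.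
  by exists u, (U_(k) + w)%MM; rewrite mpolyXD mulrCA.
apply: (IH _ dm'); exists g; apply: Xk_reg.
by rewrite mulrCA -qr -mpolyX_split.
Qed.
End Subst0.

Section Binomials.
Variables (n : nat) (c : 'I_n -> int).

Lemma mbinom_neq0 : mbinom c != 0.
Proof.
apply/eqP => /(congr1 (mcoeff (pos_exp c))).
by rewrite mcoeffD !mcoeffX eqxx mcoeff0; case: (_ == _).
Qed.

Lemma Xk_ndvd_mbinom k : ~ mdvd 'X_k (mbinom c).
Proof.
move/subst0_eq0/eqP; apply/negP; rewrite subst0D !subst0_mpolyX.
case/orP: (pos_neg_exp0 c k) => /eqP ->; rewrite eqxx;
  [case: (neg_exp c k =P 0%N) | case: (pos_exp c k =P 0%N)] => _;
  by rewrite ?addr0 ?add0r ?mpolyX_neq0 // -[_ + _]/(mbinom c) mbinom_neq0.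
Qed.

Lemma subst0_mbinom j : c j != 0 -> subst0 (mbinom c) j = 'X_[mbinom0 c j].
Proof.
rewrite subst0D !subst0_mpolyX /mbinom0 !mnmE => cj.
by case: ltrgtP cj => //= cj _; rewrite ifN ?addr0 ?add0r //; lia.
Qed.

Lemma involves_mbinom k : involves (mbinom c) k = (c k != 0).
Proof.
apply/hasP/idP => [[m /msuppD_le] | ck].
  by rewrite mem_cat !msuppX !inE => /orP[] /eqP ->; rewrite mnmE; case: ifP; lia.
have [u [v [uk vk ->]]] : exists u v : 'X_{1..n},
    [/\ (0 < u k)%N, v k = 0%N & mbinom c = 'X_[u] + 'X_[v]].
  case: ltrgtP ck => // ck _.
    exists (neg_exp c), (pos_exp c); split; last exact: addrC;
      by rewrite mnmE; case: ifP; lia.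
  by exists (pos_exp c), (neg_exp c); split => //; rewrite mnmE; case: ifP; lia.
exists u => //; rewrite mcoeff_msupp mcoeffD !mcoeffX eqxx.
by have /negbTE -> : v != u by apply/eqP => vu; move: uk; rewrite -vu vk.
Qed.

Lemma mbinom_coprime_mpolyX q m : mdvd q (mbinom c) -> mdvd q 'X_[m] ->
  q \is a GRing.unit.
Proof.
move=> [r qr] /mdvd_mpolyX [u [w [uU qE]]].
case: (pickP (fun k => 0 < w k)%N) => [k wk | w0].
  case: (@Xk_ndvd_mbinom k).
  by exists ('X_[w - U_(k)] * u%:MP * r); rewrite qr qE (mpolyX_split wk); ring.
have w_eq0 : w = 0%MM by apply/mnmP => l; rewrite mnm0E; move: (w0 l) => /=; lia.
by rewrite qE w_eq0 mpolyX0 mulr1 rmorph_unit.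
Qed.
End Binomials.

Definition lmono n (e : 'I_n -> int) : {fraction {mpoly int[n]}} :=
  \prod_(l < n) Xf l ^ e l.

Section LaurentMonomials.
Variable n : nat.
Implicit Types (e f g : 'I_n -> int) (m : 'X_{1..n}) (i k : 'I_n).

Lemma Xf_neq0 k : Xf k != 0.
Proof. by rewrite tofrac_eq0 mpolyX_neq0. Qed.

Lemma eq_lmono e f : e =1 f -> lmono e = lmono f.
Proof. by move=> ef; apply: eq_bigr => l _; rewrite ef. Qed.

Lemma lmonoD e f : lmono (fun l => e l + f l) = lmono e * lmono f.
Proof. by rewrite -big_split; apply: eq_bigr => l _; rewrite expfzDr ?Xf_neq0. Qed.

Lemma lmonoN e : lmono (fun l => - e l) = (lmono e)^-1.
Proof. by rewrite -prodfV; apply: eq_bigr => l _; rewrite invr_expz. Qed.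

Lemma lmonoXn e (d : nat) : lmono e ^+ d = lmono (fun l => e l * d%:Z).
Proof. by rewrite -prodrXl; apply: eq_bigr => l _; rewrite exprnP exprz_exp. Qed.

Lemma tofrac_mpolyX m : ('X_[m] : {mpoly int[n]})%:F = lmono (fun l => (m l)%:Z).
Proof.
by rewrite mpolyXE_id rmorph_prod; apply: eq_bigr => l _; rewrite rmorphXn exprnP.
Qed.

Lemma Xf_lmono k : Xf k = lmono (fun l => (l == k)%:Z).
Proof.
rewrite /lmono (bigD1 k) //= eqxx big1 ?mulr1 // => l /negbTE ->.
exact: expr0z.
Qed.

Lemma subst1D (p q : {mpoly int[n]}) i r :
  subst1 (p + q) i r = subst1 p i r + subst1 q i r.
Proof. exact: raddfD. Qed.

Lemma subst1_mpolyX m i r : subst1 'X_[m] i r * Xf i ^+ m i = r ^+ m i * Xmf m.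
Proof.
rewrite /subst1 mmapX /mmap1 /Xmf mpolyXE_id rmorph_prod /=.
rewrite (bigD1 i) // [in RHS](bigD1 i) //= eqxx rmorphXn mulrAC mulrA.
by congr (_ * _); apply: eq_bigr => l /negbTE ->; rewrite rmorphXn.
Qed.

Lemma subst1_mpolyX_lmono m i e : subst1 'X_[m] i (lmono e) =
  lmono (fun k => (m k)%:Z + (m i)%:Z * (e k - (k == i)%:Z)).
Proof.
apply: (mulIf (expf_neq0 (m i) (Xf_neq0 i))).
rewrite subst1_mpolyX /Xmf tofrac_mpolyX Xf_lmono !lmonoXn -!lmonoD.
by apply: eq_lmono => k; ring.
Qed.

Lemma lmono_add f g : lmono f + lmono g =
  lmono (fun k => g k - (neg_exp (fun l => f l - g l) k)%:Z) *
  (mbinom (fun l => f l - g l))%:F.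
Proof.
rewrite /mbinom rmorphD /= mulrDr !tofrac_mpolyX -!lmonoD.
by congr (_ + _); apply: eq_lmono => k;
  have := pos_exp_subn_neg (fun l => f l - g l) k; lia.
Qed.

Lemma lmono_mulXmf e : lmono e * Xmf (neg_exp e) = Xmf (pos_exp e).
Proof.
rewrite /Xmf !tofrac_mpolyX -lmonoD; apply: eq_lmono => k.
by have := pos_exp_subn_neg e k; lia.
Qed.

End LaurentMonomials.

Lemma subst1_mbinom n (c : 'I_n -> int) i (p : 'X_{1..n}) :
  exists a b : 'X_{1..n},
    subst1 (mbinom c) i (Xmf p / Xf i) * Xmf a =
    (mbinom (exchange_exp c i p))%:F * Xmf b.
Proof.
have -> : Xmf p / Xf i = lmono (fun k => (p k)%:Z - (k == i)%:Z).
  by rewrite /Xmf tofrac_mpolyX Xf_lmono -lmonoN -lmonoD.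
rewrite subst1D !subst1_mpolyX_lmono lmono_add.
set w := fun k => _ - _; exists (neg_exp w), (pos_exp w).
rewrite mulrAC lmono_mulXmf mulrC; congr (_%:F * _); apply: eq_mbinom => k.
by rewrite /exchange_exp -(pos_exp_subn_neg c k) -(pos_exp_subn_neg c i); ring.
Qed.

Section LPExchange.
Variables (n : nat) (F : 'I_n -> {mpoly int[n]}) (i : 'I_n) (Fhat : {mpoly int[n]}).

Lemma lp_exchange_id j : ~~ involves (F j) i -> lp_exchange F i Fhat j (F j).
Proof. by rewrite /lp_exchange => ->; left. Qed.

Lemma lp_exchange_mbinom j (c : 'I_n -> int) (p : 'X_{1..n}) :
  F j = mbinom c -> c i != 0 -> subst0 Fhat j = 'X_[p] ->
  lp_exchange F i Fhat j (mbinom (exchange_exp c i p)).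
Proof.
move=> Fj ci P; rewrite /lp_exchange Fj involves_mbinom ci P /=.
have [a [b Gab]] := subst1_mbinom c i p.
exists 1, (mbinom (exchange_exp c i p)), a, b, 0%MM, 0%MM; split.
- by rewrite mul1r.
- by move=> q [_ [/negP qNU _]] /mdvd1.
- by move=> q; apply: mbinom_coprime_mpolyX.
- by [].
- by move=> k; apply: Xk_ndvd_mbinom.
Qed.

End LPExchange.

Lemma tl_lshift n (k : 'I_n) : tl (lshift n k) = rshift n k.
Proof. by rewrite /tl (unsplitK (inl _ k)). Qed.

Lemma tl_rshift n (k : 'I_n) : tl (rshift n k) = lshift n k.
Proof. by rewrite /tl (unsplitK (inr _ k)). Qed.

Lemma tlK n : involutive (@tl n).
Proof.
move=> v; rewrite -(splitK v); case: (split v) => k.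
  by rewrite -[unsplit _]/(lshift n k) tl_lshift tl_rshift.
by rewrite -[unsplit _]/(rshift n k) tl_rshift tl_lshift.
Qed.

Lemma muE m (k : 'I_m) (B : 'M[int]_m) a b :
  mu k B a b = if (a == k) || (b == k) then - B a b else B a b + mu_corr (B a k) (B k b).
Proof. by rewrite mxE /mu_corr; case: ifP => // _; rewrite addrA. Qed.

Lemma mu_corr0x y : mu_corr 0 y = 0.
Proof. by rewrite /mu_corr oppr0 maxxx !mul0r subrr. Qed.

Lemma mu_corrx0 x : mu_corr x 0 = 0.
Proof. by rewrite /mu_corr oppr0 maxxx !mulr0 subrr. Qed.

Section DoubleMutation.
Variables (n : nat) (B : 'M[int]_(n + n)) (i : 'I_n).
Hypotheses (Bskew : skew_sym B) (Banti : anti_symmetric B).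

Local Notation li := (lshift n i).
Local Notation ri := (rshift n i).
Local Notation B1 := (mu ri B).
Local Notation B2 := (mu li B1).

Lemma B_tl a b : B (tl a) (tl b) = B b a.
Proof. by rewrite Banti.1 !tlK. Qed.

Lemma B_diag a : B a a = 0.
Proof. by have := Bskew a a; lia. Qed.

Lemma B_li_ri : B li ri = 0.
Proof. by rewrite -tl_lshift Banti.2. Qed.

Lemma B_ri_li : B ri li = 0.
Proof. by rewrite -tl_rshift Banti.2. Qed.

Lemma mu_ri_row_li b : B1 li b = B li b.
Proof.
rewrite muE eq_lrshift /=; case: eqP => [->|_]; first by rewrite B_li_ri oppr0.
by rewrite B_li_ri mu_corr0x addr0.
Qed.

Lemma mu_ri_col_li a : B1 a li = B a li.
Proof.
rewrite muE eq_lrshift orbF; case: eqP => [->|_]; first by rewrite B_ri_li oppr0.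
by rewrite B_ri_li mu_corrx0 addr0.
Qed.

Lemma mu2_col_li a : B2 a li = - B a li.
Proof. by rewrite muE eqxx orbT mu_ri_col_li. Qed.

Lemma mu2_row_li b : B2 li b = - B li b.
Proof. by rewrite muE eqxx mu_ri_row_li. Qed.

Lemma mu2_row_ri b : B2 ri b = - B ri b.
Proof.
rewrite muE eq_rlshift /=; case: eqP => [->|_]; first by rewrite mu_ri_col_li.
by rewrite mu_ri_col_li B_ri_li mu_corr0x addr0 muE eqxx.
Qed.

Lemma mu2E a b : a != li -> a != ri -> b != li -> b != ri ->
  B2 a b = B a b + mu_corr (B a ri) (B ri b) + mu_corr (B a li) (B li b).
Proof.
move=> /negbTE ali /negbTE ari /negbTE bli /negbTE bri.
by rewrite muE ali bli mu_ri_row_li mu_ri_col_li muE ari bri.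
Qed.

Lemma B_rshift_lshift j k : B (rshift n k) (lshift n j) = B (rshift n j) (lshift n k).
Proof. by rewrite -B_tl tl_lshift tl_rshift. Qed.

Lemma B_rshift_rshift j k : B (rshift n k) (rshift n j) = B (lshift n j) (lshift n k).
Proof. by rewrite -B_tl !tl_rshift. Qed.

Lemma Fcoef_diag j : Fcoef B j j = 0.
Proof. by rewrite /Fcoef B_diag -tl_rshift Banti.2. Qed.

Lemma Fcoef_row j k :
  Fcoef B j k = B (rshift n j) (lshift n k) - B (lshift n j) (lshift n k).
Proof. by rewrite /Fcoef (Bskew (lshift n k)) B_rshift_lshift addrC. Qed.

Lemma Fcoef_col j k :
  Fcoef B j k = B (lshift n k) (lshift n j) - B (lshift n k) (rshift n j).
Proof. by rewrite /Fcoef B_rshift_lshift (Bskew (rshift n j)). Qed.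

Lemma Fcoef_mu2_row_i k : Fcoef B2 i k = - Fcoef B i k.
Proof. by rewrite /Fcoef !mu2_col_li opprD. Qed.

Lemma Fcoef_mu2_col_i j : Fcoef B2 j i = - Fcoef B j i.
Proof. by rewrite /Fcoef mu2_row_li mu2_row_ri opprD. Qed.

Lemma Fcoef_mu2 j k : j != i -> k != i -> Fcoef B2 j k = Fcoef B j k +
  (mu_corr (B (lshift n k) ri) (B ri (lshift n j))
   + mu_corr (B (lshift n k) li) (B li (lshift n j))
   + mu_corr (- B (lshift n k) li) (B ri (lshift n j))
   + mu_corr (- B (lshift n k) ri) (B li (lshift n j))).
Proof.
move=> ji ki; rewrite /Fcoef !mu2E ?eq_lshift ?eq_rshift ?eq_lrshift ?eq_rlshift //.
rewrite (B_rshift_rshift i k) (B_rshift_lshift i k).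
by rewrite (Bskew li (lshift n k)) (Bskew ri (lshift n k)); lia.
Qed.

Hypothesis no_path : ~ (exists a, 0 < B a li /\ 0 < B li (tl a)).

Lemma no_path_row v : B v li * B v ri <= 0.
Proof.
have B_tl_li w : B (tl w) li = B ri w by rewrite -[li]tl_rshift B_tl.
have B_li_tl w : B li (tl w) = B w ri by rewrite -[li]tl_rshift B_tl.
rewrite leNgt; apply/negP => pos; apply: no_path.
case: (ltrgtP (B v li) 0) => vli; last by move: pos; rewrite vli mul0r ltxx.
  by exists (tl v); rewrite tlK B_tl_li (Bskew ri) (Bskew li); split; nia.
by exists v; rewrite B_li_tl; split; nia.
Qed.

Lemma no_path_col v : B li v * B ri v <= 0.
Proof. by rewrite (Bskew li) (Bskew ri) mulrNN no_path_row. Qed.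

Lemma Fcoef_no_path j : Fcoef B j i != 0 -> Fcoef B i j != 0.
Proof. by have := no_path_col (lshift n j); rewrite (Fcoef_row i j) /Fcoef; nia. Qed.

Lemma Fcoef_mu2_no_path j k : j != i ->
  Fcoef B2 j k = exchange_exp (Fcoef B j) i (mbinom0 (Fcoef B i) j) k.
Proof.
rewrite /exchange_exp => ji; have [->|ki] := eqVneq k i.
  rewrite Fcoef_mu2_col_i /mbinom0; case: ifP => _;
    rewrite ?neg_expZ ?pos_expZ Fcoef_diag ?oppr0 maxxx; lia.
rewrite Fcoef_mu2 // mu_corr_sum ?no_path_row ?no_path_col // mulr0 subr0.
by rewrite /mbinom0 -Fcoef_row -Fcoef_col; case: ifP; rewrite ?neg_expZ ?pos_expZ.
Qed.

Lemma FQ_mu2_i : FQ B2 i = FQ B i.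
Proof.
rewrite !FQ_mbinom -(mbinomN (Fcoef B i)); apply: eq_mbinom.
exact: Fcoef_mu2_row_i.
Qed.

Lemma FQ_mu2 j : j != i ->
  FQ B2 j = mbinom (exchange_exp (Fcoef B j) i (mbinom0 (Fcoef B i) j)).
Proof. by move=> ji; rewrite FQ_mbinom; apply: eq_mbinom => k; apply: Fcoef_mu2_no_path. Qed.

Lemma FQ_mu2_id j : j != i -> Fcoef B j i = 0 -> FQ B2 j = FQ B j.
Proof.
move=> ji cji; rewrite FQ_mu2 // FQ_mbinom; apply: eq_mbinom => k.
by rewrite /exchange_exp cji mul0r addr0.
Qed.

End DoubleMutation.

Unset Implicit Arguments.

Theorem proposition4p8 (n : nat) (B : 'M[int]_(n + n)) (i : 'I_n) :
  skew_sym B -> anti_symmetric B ->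
  valid_LP_seed (FQ B) ->
  (forall j : 'I_n, is_hat (FQ B) j (FQ B j)%:F) ->
  ~ (exists a : 'I_(n + n), 0 < B a (lshift n i) /\ 0 < B (lshift n i) (tl a)) ->
  lp_mutation (FQ B) i
    (fun k => if k == i then (FQ B i)%:F / Xf k else Xf k)
    (FQ (mu (lshift n i) (mu (rshift n i) B))).
Proof.
move=> Bskew Banti _ hat no_path.
exists (FQ B i); split=> [|k|j]; [exact: hat | by case: eqP => [->|] |].
have [->|ji] := eqVneq j i.
  rewrite FQ_mu2_i //; apply: lp_exchange_id.
  by rewrite FQ_mbinom involves_mbinom Fcoef_diag.
have [cji0|cji] := eqVneq (Fcoef B j i) 0.
  rewrite FQ_mu2_id //; apply: lp_exchange_id.
  by rewrite FQ_mbinom involves_mbinom cji0.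
rewrite FQ_mu2 //; apply: lp_exchange_mbinom => //; first exact: FQ_mbinom.
by rewrite FQ_mbinom subst0_mbinom //; apply: Fcoef_no_path.
Qed.
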